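(* Consider the rectangular problem $$\max_{\alpha\in\mathbb{R}^{|\mathcal A|\times|\mathcal T|}}\ \sum_{i\in\mathcal A}\sum_{j\in\mathcal T} w_{ij}\alpha_{ij}\quad\text{s.t.}\quad \sum_{j\in\mathcal T}\alpha_{ij}\le 1\ (\forall i),\ \ \sum_i\alpha_{iP}=1,\ \ \sum_i\alpha_{ij}\le 1\ (\forall j\in\mathcal T\setminus\{P\}),\ \ 0\le\alpha_{ij}\le 1,$$ with $|\mathcal A|>|\mathcal T|$. Let $K=|\mathcal A|-|\mathcal T|$ and introduce $K$ secondary trajectory tasks $P'_1,\dots,P'_K$ with weights $w_{iP'_k}=(d(q_P,x_i)+\epsilon')^{-1}$ for all agents $i$ and all $k$, where $\epsilon'>0$. Consider the augmented square problem over $\tilde\alpha\in\mathbb{R}^{|\mathcal A|\times(|\mathcal T|+K)}$: $$\max\ \sum_{i}\sum_{j\in\mathcal T\cup\{P'_1,\dots,P'_K\}} w_{ij}\tilde\alpha_{ij}\quad\text{s.t. every row sum and every column sum of }\tilde\alpha\text{ equals }1,\ 0\le\tilde\alpha_{ij}\le1.$$ Then there exists $\epsilon'_0>0$ (depending on the agent positions, task locations and $\epsilon$) such that for every $\epsilon'>\epsilon'_0$, the restriction of any optimal solution $\tilde\alpha$ of the augmented problem to the columns indexed by $\mathcal T$ is an optimal solution of the rectangular problem; i.e., introducing the secondary trajectory tasks does not alter the assignment of the trajectory task $P$ and the online tasks.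
   Context: A team consists of a finite set $\mathcal A$ of agents; agent $i$ has position $x_i\in\mathbb{R}^m$. The task set $\mathcal T$ consists of one trajectory task $P$, with location $q_P\in\mathbb{R}^m$ (the next reference waypoint), and online tasks $O_j$ with locations $q_{O_j}\in\mathbb{R}^m$. $d(\cdot,\cdot)$ is Euclidean distance and $\epsilon>0$ is fixed. The weights are $w_{iP}=(d(q_P,x_i)+\epsilon)^{-1}$ and $w_{iO_j}=(d(q_{O_j},x_i)+\epsilon)^{-1}$; in particular $0<w_{ij}\le\epsilon^{-1}$. The variable $\alpha_{ij}$ is the splitting (assignment) coefficient of agent $i$ to task $j$. *)

From mathcomp Require Import all_boot all_order all_algebra.
From mathcomp Require Import reals.
Set Implicit Arguments. Unset Strict Implicit. Unset Printing Implicit Defensive.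
Import Order.TTheory GRing.Theory Num.Theory.
Local Open Scope ring_scope.

Section Defs.
Variable R : realType.

Definition edist (dim : nat) (a b : 'rV[R]_dim) : R :=
  Num.sqrt (\sum_(k < dim) (a 0 k - b 0 k) ^+ 2).

Definition weight (dim : nat) (e : R) (q x : 'rV[R]_dim) : R :=
  (edist q x + e)^-1.

Variables (n m : nat).
(* agents : 'I_n ; tasks : 'I_m.+1, task ord0 is the trajectory task P,
   tasks lift ord0 j are the online tasks O_j. *)

Definition rect_objective (w : 'I_n -> 'I_m.+1 -> R)
    (alpha : 'I_n -> 'I_m.+1 -> R) : R :=
  \sum_(i < n) \sum_(j < m.+1) w i j * alpha i j.

Definition rect_feasible (alpha : 'I_n -> 'I_m.+1 -> R) : Prop :=
  [/\ (forall i, \sum_(j < m.+1) alpha i j <= 1),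
      \sum_(i < n) alpha i ord0 = 1,
      (forall j : 'I_m.+1, j != ord0 -> \sum_(i < n) alpha i j <= 1) &
      (forall i j, 0 <= alpha i j <= 1)].

Definition rect_optimal w alpha : Prop :=
  rect_feasible alpha /\
  forall beta, rect_feasible beta -> rect_objective w beta <= rect_objective w alpha.

(* Augmented square problem: the columns are the original tasks ('I_m.+1)
   followed by K = n - (m+1) secondary trajectory tasks ('I_K); an augmented
   matrix is given as the pair (alpha, beta) of its two column blocks. *)
Definition Ksec : nat := (n - m.+1)%N.

Definition aug_objective (w : 'I_n -> 'I_m.+1 -> R) (w' : 'I_n -> R)
    (alpha : 'I_n -> 'I_m.+1 -> R) (beta : 'I_n -> 'I_Ksec -> R) : R :=
  \sum_(i < n) (\sum_(j < m.+1) w i j * alpha i j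
                + \sum_(k < Ksec) w' i * beta i k).

Definition aug_feasible (alpha : 'I_n -> 'I_m.+1 -> R)
    (beta : 'I_n -> 'I_Ksec -> R) : Prop :=
  [/\ (forall i, \sum_(j < m.+1) alpha i j + \sum_(k < Ksec) beta i k = 1),
      (forall j, \sum_(i < n) alpha i j = 1),
      (forall k, \sum_(i < n) beta i k = 1),
      (forall i j, 0 <= alpha i j <= 1) &
      (forall i k, 0 <= beta i k <= 1)].

Definition aug_optimal w w' alpha beta : Prop :=
  aug_feasible alpha beta /\
  forall alpha2 beta2, aug_feasible alpha2 beta2 ->
    aug_objective w w' alpha2 beta2 <= aug_objective w w' alpha beta.

End Defs.

From mathcomp Require Import all_boot all_order all_algebra.
From mathcomp Require Import reals.
From mathcomp Require Import ring lra.
From mathcomp Require Import boolp.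
Set Implicit Arguments. Unset Strict Implicit. Unset Printing Implicit Defensive.
Import Order.TTheory GRing.Theory Num.Theory.
Local Open Scope ring_scope.

(* The K secondary columns of the augmented problem are interchangeable, so
   they can be eliminated: on the columns of T the augmented problem is the
   maximisation, over the assignments covering every task exactly once, of the
   rectangular objective W plus the perturbation sum_i w'_i (1 - row sum_i),
   with 0 <= w'_i <= 1/eps'.  The feasible set is a polytope, so at every point
   the directions into it are described by its set of active constraints.  For
   each of the finitely many active sets, either no feasible direction increases
   W, or some does and moves the row sums by at most e_A times the gain in W.
   Once eps' exceeds max_A e_A, such a direction also increases the perturbed
   objective, so a maximiser of the perturbed objective maximises W. *)

Section RealBounds.
Variable R : realType.

Lemma ex_common_pos_bound (T : finType) (P : T -> R -> Prop) :
  (forall a e e', 0 < e -> e <= e' -> P a e -> P a e') ->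
  (forall a, exists e, 0 < e /\ P a e) -> exists e, 0 < e /\ forall a, P a e.
Proof.
move=> mono ex.
suff [e [e0 He]] : exists e, 0 < e /\ forall a, a \in enum T -> P a e.
  by exists e; split=> // a; apply: He; rewrite mem_enum.
elim: (enum T) => [|b s [e1 [e10 IH]]]; first by exists 1.
have [e2 [e20 Pe2]] := ex b.
exists (Num.max e1 e2); split; first by rewrite lt_max e10.
move=> a; rewrite in_cons => /orP [/eqP ->|/IH Pe1].
- by apply: (mono _ e2) => //; rewrite le_max lexx orbT.
- by apply: (mono _ e1) => //; rewrite le_max lexx.
Qed.

Lemma ex_small_step (u v : R) :
  0 <= u -> (u = 0 -> 0 <= v) ->
  exists2 t, 0 < t & forall t', 0 <= t' <= t -> 0 <= u + t' * v.
Proof.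
move=> u0 v0; have [u_eq0|u_neq0] := eqVneq u 0.
  exists 1 => // t' /andP [t'0 _].
  by rewrite u_eq0 add0r mulr_ge0 ?v0.
have {u0 u_neq0} u_gt0 : 0 < u by rewrite lt_def u_neq0.
have v_ge : - `|v| <= v by rewrite lerNl -normrN ler_norm.
exists (u / (`|v| + 1)); first by rewrite divr_gt0 ?ltr_wpDl.
move=> t' /andP [t'0 t'_le].
have : t' * (`|v| + 1) <= u by rewrite -ler_pdivlMr ?ltr_wpDl.
have : t' * - `|v| <= t' * v by rewrite ler_wpM2l.
nra.
Qed.

End RealBounds.

Section Assignments.
Variables (R : realType) (n m : nat).
Implicit Types (w a g d : 'I_n -> 'I_m.+1 -> R).

Definition row_sum a i : R := \sum_(j < m.+1) a i j.

Definition covering a : Prop :=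
  [/\ (forall j, \sum_(i < n) a i j = 1), (forall i, row_sum a i <= 1) &
      (forall i j, 0 <= a i j)].

Definition slack_objective w (w' : 'I_n -> R) a : R :=
  rect_objective w a + \sum_(i < n) w' i * (1 - row_sum a i).

Lemma entry_le_sum (F : 'I_n -> R) i0 :
  (forall i, 0 <= F i) -> F i0 <= \sum_(i < n) F i.
Proof. by move=> F_ge0; rewrite (bigD1 i0) //= lerDl sumr_ge0. Qed.

Lemma covering_rect_feasible a : covering a -> rect_feasible a.
Proof.
case=> col row a_ge0; split=> // [j _|i j]; first by rewrite col.
by rewrite a_ge0 -(col j) entry_le_sum.
Qed.

Lemma row_sum_comb a d t i :
  row_sum (fun i j => a i j + t * d i j) i = row_sum a i + t * row_sum d i.
Proof. by rewrite /row_sum mulr_sumr -big_split. Qed.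

Lemma rect_objective_comb w a d t :
  rect_objective w (fun i j => a i j + t * d i j) =
  rect_objective w a + t * rect_objective w d.
Proof.
rewrite /rect_objective mulr_sumr -big_split; apply: eq_bigr => i _.
by rewrite mulr_sumr -big_split; apply: eq_bigr => j _ /=; ring.
Qed.

Lemma rect_objectiveB w a g :
  rect_objective w (fun i j => a i j - g i j) =
  rect_objective w a - rect_objective w g.
Proof.
rewrite /rect_objective -sumrB; apply: eq_bigr => i _.
by rewrite -sumrB; apply: eq_bigr => j _ /=; ring.
Qed.

Lemma slack_objective_comb w (w' : 'I_n -> R) a d t :
  slack_objective w w' (fun i j => a i j + t * d i j) =
  slack_objective w w' a +
    t * (rect_objective w d - \sum_(i < n) w' i * row_sum d i).
Proof.
rewrite /slack_objective rect_objective_comb.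
have -> : \sum_(i < n) w' i * (1 - row_sum (fun i j => a i j + t * d i j) i) =
          \sum_(i < n) w' i * (1 - row_sum a i) -
          t * \sum_(i < n) w' i * row_sum d i.
  by rewrite mulr_sumr -sumrB; apply: eq_bigr => i _; rewrite row_sum_comb; ring.
ring.
Qed.

Section Augmented.
Hypothesis lt_tasks_agents : (m.+1 < n)%N.

Let Ksec_gt0 : 0 < (Ksec n m)%:R :> R.
Proof. by rewrite ltr0n /Ksec subn_gt0. Qed.

Lemma aug_objectiveE w (w' : 'I_n -> R) a b :
  aug_feasible a b -> aug_objective w w' a b = slack_objective w w' a.
Proof.
case=> row _ _ _ _; rewrite /aug_objective /slack_objective /rect_objective.
rewrite -big_split; apply: eq_bigr => i _ /=; rewrite -mulr_sumr.
by congr (_ + _ * _); rewrite /row_sum; have := row i; lra.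
Qed.

Lemma aug_feasible_extend a :
  covering a ->
  aug_feasible a (fun i (k : 'I_(Ksec n m)) => (1 - row_sum a i) / (Ksec n m)%:R).
Proof.
move=> [col row a_ge0]; have K_ge1 : 1 <= (Ksec n m)%:R :> R.
  by rewrite ler1n /Ksec subn_gt0.
split=> // [i|k|i j|i k].
- rewrite sumr_const card_ord -[_ *+ Ksec n m]mulr_natr divfK ?gt_eqF // /row_sum; lra.
- rewrite -mulr_suml big_split /= sumr_const card_ord sumrN /row_sum exchange_big.
  rewrite /= (eq_bigr _ (fun j _ => col j)) sumr_const card_ord -natrB 1?ltnW //.
  by rewrite mulfV ?gt_eqF.
- by rewrite a_ge0 -(col j) entry_le_sum.
- have row_ge0 : 0 <= row_sum a i by rewrite sumr_ge0.
  have := row i; rewrite divr_ge0 ?ler_pdivrMr ?(ltW Ksec_gt0) //= ?subr_ge0 //.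
  nra.
Qed.

Lemma aug_optimal_slack w (w' : 'I_n -> R) a b :
  aug_optimal w w' a b ->
  covering a /\ forall g, covering g -> slack_objective w w' g <= slack_objective w w' a.
Proof.
move=> [feas opt]; have [row col _ a01 b01] := feas; split.
- split=> // [i|i j]; last by case/andP: (a01 i j).
  have : 0 <= \sum_(k < Ksec n m) b i k by apply: sumr_ge0 => k _; case/andP: (b01 i k).
  by have := row i; rewrite /row_sum; lra.
- move=> g /aug_feasible_extend g_feas.
  by rewrite -(aug_objectiveE w w' g_feas) -(aug_objectiveE w w' feas) opt.
Qed.

(* The missing coverage of each task is filled proportionally to the free
   capacity of the agents, which exceeds it because there are more agents than
   tasks. *)
Lemma rect_feasible_dominated w g :
  (forall i j, 0 <= w i j) -> rect_feasible g ->
  exists2 g', covering g' & rect_objective w g <= rect_objective w g'.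
Proof.
move=> w_ge0 [row colP col g01].
pose r i := 1 - row_sum g i; pose c j := 1 - \sum_(i < n) g i j.
pose S := \sum_(i < n) r i.
have c_ge0 j : 0 <= c j.
  by rewrite /c subr_ge0; case: (eqVneq j ord0) => [->|/col]; rewrite ?colP.
have r_ge0 i : 0 <= r i by rewrite /r subr_ge0 row.
have sum_c_le : \sum_(j < m.+1) \sum_(i < n) g i j <= (m.+1)%:R.
  rewrite -[in X in _ <= X](card_ord m.+1) -sumr_const.
  by apply: ler_sum => j _; case: (eqVneq j ord0) => [->|/col]; rewrite ?colP.
have S_def : S = n%:R - \sum_(j < m.+1) \sum_(i < n) g i j.
  by rewrite /S /r sumrB sumr_const card_ord /row_sum exchange_big.
have sum_c : \sum_(j < m.+1) c j = (m.+1)%:R - \sum_(j < m.+1) \sum_(i < n) g i j.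
  by rewrite /c sumrB sumr_const card_ord.
have lt_mn : (m.+1)%:R < n%:R :> R by rewrite ltr_nat.
have S_gt0 : 0 < S by rewrite S_def; lra.
have c_le_S : \sum_(j < m.+1) c j <= S by rewrite sum_c S_def; lra.
have frac_ge0 i : 0 <= r i / S by rewrite divr_ge0 ?r_ge0 ?ltW.
exists (fun i j => g i j + r i / S * c j); first split.
- move=> j; rewrite big_split /= -!mulr_suml mulfV ?gt_eqF // mul1r /c; lra.
- move=> i; rewrite /row_sum big_split /= -mulr_sumr.
  have : r i / S * \sum_(j < m.+1) c j <= r i / S * S by rewrite ler_wpM2l.
  by rewrite divfK ?gt_eqF // /r /row_sum; lra.
- by move=> i j; rewrite addr_ge0 ?mulr_ge0 ?invr_ge0 ?(ltW S_gt0) //; case/andP: (g01 i j).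
- rewrite -subr_ge0 -rect_objectiveB sumr_ge0 // => i _.
  rewrite sumr_ge0 // => j _; rewrite addrC addKr.
  exact: mulr_ge0 (w_ge0 i j) (mulr_ge0 (frac_ge0 i) (c_ge0 j)).
Qed.

End Augmented.

(* The column constraints of [covering] are equalities, hence always tight;
   the other tight ones at [a] are its zero entries and its saturated rows. *)
Definition active_set a : {set 'I_n * 'I_m.+1} * {set 'I_n} :=
  ([set p | a p.1 p.2 == 0], [set i | row_sum a i == 1]).

Definition feasible_dir (A : {set 'I_n * 'I_m.+1} * {set 'I_n}) d : Prop :=
  [/\ (forall j, \sum_(i < n) d i j = 0),
      (forall i j, (i, j) \in A.1 -> 0 <= d i j) &
      (forall i, i \in A.2 -> row_sum d i <= 0)].

Definition row_sum_norm d : R := \sum_(i < n) `|row_sum d i|.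

Lemma covering_step a d :
  covering a -> feasible_dir (active_set a) d ->
  exists2 t, 0 < t & covering (fun i j => a i j + t * d i j).
Proof.
move=> [col row a_ge0] [d_col d_entry d_row].
pose u x := match x with inl p => a p.1 p.2 | inr i => 1 - row_sum a i end.
pose v x := match x with inl p => d p.1 p.2 | inr i => - row_sum d i end.
pose P x e := forall t, 0 <= t <= e^-1 -> 0 <= u x + t * v x.
have [e [e_gt0 Pe]] : exists e, 0 < e /\ forall x, P x e.
  apply: ex_common_pos_bound => [x e e' e_gt0 le_ee' Px t /andP [t0 le_t]|x].
    by apply: Px; rewrite t0 (le_trans le_t) // lef_pV2 ?posrE ?(lt_le_trans e_gt0).
  have v_ge0 : u x = 0 -> 0 <= v x.
    case: x => [[i j]|i] /= u0; first by apply: d_entry; rewrite inE /= u0.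
    by rewrite oppr_ge0; apply: d_row; rewrite inE /= eq_sym -subr_eq0 u0.
  have u_ge0 : 0 <= u x by case: x {v_ge0} => [[i j]|i] /=; rewrite ?subr_ge0.
  have [t t_gt0 Pt] := ex_small_step u_ge0 v_ge0.
  by exists t^-1; rewrite invr_gt0 /P invrK.
exists e^-1; first by rewrite invr_gt0.
have stay x : 0 <= u x + e^-1 * v x by apply: Pe; rewrite lexx invr_ge0 ltW.
split=> [j|i|i j].
- by rewrite big_split /= -mulr_sumr d_col col mulr0 addr0.
- by have := stay (inr i); rewrite row_sum_comb /= mulrN; lra.
- exact: stay (inl (i, j)).
Qed.

(* The bound depends only on the active set, of which there are finitely many. *)
Lemma ex_dir_ratio_bound w :
  exists e, 0 < e /\ forall A d0, feasible_dir A d0 -> 0 < rect_objective w d0 ->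
    exists d, [/\ feasible_dir A d, 0 < rect_objective w d &
                  row_sum_norm d <= e * rect_objective w d].
Proof.
apply: ex_common_pos_bound => [A e e' _ le_ee' Pe d0 dir0 W0|A].
  have [d [dir Wd bd]] := Pe d0 dir0 W0.
  by exists d; split=> //; apply: le_trans bd _; rewrite ler_wpM2r // ltW.
have [[d0 [dir0 W0]]|no_dir] :=
  pselect (exists d0, feasible_dir A d0 /\ 0 < rect_objective w d0).
- exists (row_sum_norm d0 / rect_objective w d0 + 1); split.
    by rewrite ltr_wpDl // divr_ge0 ?(ltW W0) ?sumr_ge0.
  move=> _ _ _; exists d0; split=> //.
  by rewrite mulrDl divfK ?gt_eqF // mul1r lerDl ltW.
- by exists 1; split=> // d0 dir0 W0; exfalso; apply: no_dir; exists d0.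
Qed.

Lemma weighted_row_sum_le (w' : 'I_n -> R) c d :
  (forall i, 0 <= w' i <= c) ->
  \sum_(i < n) w' i * row_sum d i <= c * row_sum_norm d.
Proof.
move=> w'_bd; rewrite /row_sum_norm mulr_sumr; apply: ler_sum => i _.
have /andP [w'_ge0 w'_le] := w'_bd i.
by apply: le_trans (ler_wpM2l w'_ge0 (ler_norm _)) _; rewrite ler_wpM2r.
Qed.

Lemma slack_optimal_rect_optimal w :
  exists e, 0 < e /\ forall (w' : 'I_n -> R) c,
    0 <= c -> c * e < 1 -> (forall i, 0 <= w' i <= c) ->
    forall a, covering a ->
      (forall g, covering g -> slack_objective w w' g <= slack_objective w w' a) ->
    forall g, covering g -> rect_objective w g <= rect_objective w a.
Proof.
have [e [e_gt0 bound]] := ex_dir_ratio_bound w.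
exists e; split=> // w' c c_ge0 ce_lt1 w'_bd a cov_a a_opt g cov_g.
rewrite leNgt; apply/negP => W_lt.
have [[col_a row_a a_ge0] [col_g row_g g_ge0]] := (cov_a, cov_g).
have dir0 : feasible_dir (active_set a) (fun i j => g i j - a i j).
  split=> [j|i j|i]; rewrite ?inE /=.
  - by rewrite sumrB col_a col_g subrr.
  - by move=> /eqP ->; rewrite subr0.
  - by move=> /eqP row1; rewrite /row_sum sumrB -/(row_sum g i) -/(row_sum a i) row1 subr_le0.
have [|d [dir Wd bd]] := bound _ _ dir0; first by rewrite rect_objectiveB subr_gt0.
have [t t_gt0 cov_t] := covering_step cov_a dir.
have := a_opt _ cov_t; rewrite slack_objective_comb gerDl pmulr_rle0 // subr_le0.
have := weighted_row_sum_le d w'_bd.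
have : c * row_sum_norm d <= c * (e * rect_objective w d) by rewrite ler_wpM2l.
have : c * (e * rect_objective w d) < rect_objective w d by rewrite mulrA gtr_pMl.
lra.
Qed.

End Assignments.

Section Weights.
Variables (R : realType) (dim : nat).

Lemma weight_gt0 e (q x : 'rV[R]_dim) : 0 < e -> 0 < weight e q x.
Proof. by move=> e_gt0; rewrite invr_gt0 ltr_wpDl ?sqrtr_ge0. Qed.

Lemma weight_le_inv e (q x : 'rV[R]_dim) : 0 < e -> weight e q x <= e^-1.
Proof.
by move=> e_gt0; rewrite lef_pV2 ?posrE ?ltr_wpDl ?sqrtr_ge0 // lerDr sqrtr_ge0.
Qed.

End Weights.

Theorem mainTheorem3 (R : realType) (dim n m : nat)
    (x : 'I_n -> 'rV[R]_dim) (q : 'I_m.+1 -> 'rV[R]_dim) (eps : R) :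
  0 < eps -> (m.+1 < n)%N ->
  exists eps0 : R, 0 < eps0 /\
    forall eps' : R, eps0 < eps' ->
    forall (alpha : 'I_n -> 'I_m.+1 -> R) (beta : 'I_n -> 'I_(Ksec n m) -> R),
      aug_optimal (fun i j => weight eps (q j) (x i))
                  (fun i => weight eps' (q ord0) (x i)) alpha beta ->
      rect_optimal (fun i j => weight eps (q j) (x i)) alpha.
Proof.
move=> eps_gt0 lt_mn.
have [e [e_gt0 slack_opt]] := slack_optimal_rect_optimal (fun i j => weight eps (q j) (x i)).
exists e; split=> // eps' lt_e_eps' alpha beta aug_opt.
have eps'_gt0 : 0 < eps' := lt_trans e_gt0 lt_e_eps'.
have [cov_alpha alpha_opt] := aug_optimal_slack lt_mn aug_opt.
split=> [|g feas_g]; first exact: covering_rect_feasible.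
have w_ge0 i j : 0 <= weight eps (q j) (x i) by rewrite ltW ?weight_gt0.
have [g' cov_g' le_g] := rect_feasible_dominated lt_mn w_ge0 feas_g.
apply: le_trans le_g (slack_opt _ eps'^-1 _ _ _ _ cov_alpha alpha_opt _ cov_g').
- by rewrite invr_ge0 ltW.
- by rewrite mulrC ltr_pdivrMr // mul1r.
- by move=> i; rewrite weight_le_inv // ltW ?weight_gt0.
Qed.
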